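(* Let $G=(V,E)$ be a graph of neighborhood diversity $k$ with neighborhood diversity classes $N_1,\ldots,N_k$, and let $r$ be a non-negative integer. Then the number of pairwise $r$-nonequivalent shapes of subsets of $V$ in $G$ (i.e., the number of classes of the $r$-equivalence relation on the set of shapes of subsets $X \subseteq V$) is at most $(2r+3)^k$.
   Context: The neighborhood diversity of $G$ is the minimum size of a partition of $V$ into classes such that any two vertices $v,v'$ in the same class satisfy $N(v)\setminus\{v'\} = N(v')\setminus\{v\}$; $N_1,\ldots,N_k$ is such a partition of minimum size $k$. The shape of $X \subseteq V$ is the $k$-tuple $s=(s_1,\ldots,s_k)$ with $s_i = |X\cap N_i|$; its complementary shape is $\overline{s} = (|N_1|-s_1,\ldots,|N_k|-s_k)$, the shape of $V\setminus X$. Two shapes $s,t$ are $r$-equivalent if for every $i$ either $s_i = t_i$ or both $s_i,t_i > r$, and the same condition holds for the complementary shapes $\overline{s},\overline{t}$. *)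

From mathcomp Require Import all_boot.
Set Implicit Arguments. Unset Strict Implicit. Unset Printing Implicit Defensive.

Definition simple_graph (T : finType) (e : rel T) : Prop :=
  symmetric e /\ irreflexive e.

Definition nbhd (T : finType) (e : rel T) (v : T) : {set T} := [set u | e v u].

Definition nd_partition (T : finType) (e : rel T) (k : nat)
    (cls : 'I_k -> {set T}) : Prop :=
  [/\ forall i, cls i != set0,
      forall i j, i != j -> [disjoint cls i & cls j],
      forall v, exists i, v \in cls i
    & forall i v v', v \in cls i -> v' \in cls i ->
        nbhd e v :\ v' = nbhd e v' :\ v].

(* cls is a neighbourhood-diversity partition of minimum size k
   (so k is the neighbourhood diversity of the graph). *)
Definition min_nd_partition (T : finType) (e : rel T) (k : nat)
    (cls : 'I_k -> {set T}) : Prop :=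
  nd_partition e cls /\
  forall k' (cls' : 'I_k' -> {set T}), nd_partition e cls' -> k <= k'.

Definition nd_shape (T : finType) (k : nat) (cls : 'I_k -> {set T})
    (X : {set T}) : 'I_k -> nat :=
  fun i => #|X :&: cls i|.

Definition cshape (T : finType) (k : nat) (cls : 'I_k -> {set T})
    (s : 'I_k -> nat) : 'I_k -> nat :=
  fun i => #|cls i| - s i.

Definition req_vec (k r : nat) (s t : 'I_k -> nat) : bool :=
  [forall i, (s i == t i) || ((r < s i) && (r < t i))].

Definition r_equiv (T : finType) (k : nat) (cls : 'I_k -> {set T}) (r : nat)
    (s t : 'I_k -> nat) : bool :=
  req_vec r s t && req_vec r (cshape cls s) (cshape cls t).

(* Within a class of size n, a count s is determined up to r-equivalence
   (of s and of its complement n - s) by one of 2r + 3 values: s itself when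
   s <= r, the complement n - s when that is <= r, or "both exceed r".
   Coding a shape class by class therefore maps pairwise r-nonequivalent
   shapes injectively into the (2r + 3)^k functions 'I_k -> 'I_(2r+3). *)

From mathcomp Require Import all_boot.
From mathcomp Require Import zify.

Set Implicit Arguments.
Unset Strict Implicit.

Definition count_code (r n s : nat) : nat :=
  if s <= r then s else if n - s <= r then r.+1 + (n - s) else (2 * r).+2.

Lemma count_code_lt (r n s : nat) : count_code r n s < 2 * r + 3.
Proof. by rewrite /count_code; case: ifP => ?; [|case: ifP => ?]; lia. Qed.

Lemma count_code_req (r n s t : nat) :
  s <= n -> t <= n -> count_code r n s = count_code r n t ->
  ((s == t) || (r < s) && (r < t)) &&
  ((n - s == n - t) || (r < n - s) && (r < n - t)).
Proof.
rewrite /count_code => sn tn.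
by case: ifP => ?; [|case: ifP => ?]; (case: ifP => ?; [|case: ifP => ?]); lia.
Qed.

Section ShapeCode.

Variables (T : finType) (k r : nat) (cls : 'I_k -> {set T}).

Definition shape_code (X : {set T}) : {ffun 'I_k -> 'I_(2 * r + 3)} :=
  [ffun i => Ordinal (count_code_lt r #|cls i| (nd_shape cls X i))].

Lemma nd_shape_le (X : {set T}) (i : 'I_k) : nd_shape cls X i <= #|cls i|.
Proof. exact/subset_leq_card/subsetIr. Qed.

Lemma shape_code_r_equiv (X Y : {set T}) :
  shape_code X = shape_code Y ->
  r_equiv cls r (nd_shape cls X) (nd_shape cls Y).
Proof.
move=> eq_code.
have code_eq i : count_code r #|cls i| (nd_shape cls X i)
               = count_code r #|cls i| (nd_shape cls Y i).
  by move/(congr1 (fun c : {ffun _ -> _} => val (c i))): eq_code; rewrite !ffunE.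
have req i := count_code_req (nd_shape_le X i) (nd_shape_le Y i) (code_eq i).
by apply/andP; split; apply/forallP => i; case/andP: (req i).
Qed.

End ShapeCode.

Theorem proposition2 (T : finType) (e : rel T) (k : nat)
    (cls : 'I_k -> {set T}) (r : nat) :
  simple_graph e ->
  min_nd_partition e cls ->
  forall F : {set {set T}},
    (forall X Y, X \in F -> Y \in F -> X != Y ->
       ~~ r_equiv cls r (nd_shape cls X) (nd_shape cls Y)) ->
    #|F| <= (2 * r + 3) ^ k.
Proof.
move=> _ _ F nonequiv.
have code_inj : {in F &, injective (shape_code r cls)}.
  move=> X Y XF YF /shape_code_r_equiv; apply: contraTeq.
  exact: nonequiv.
rewrite -(card_in_imset code_inj).
by apply: leq_trans (max_card _) _; rewrite card_ffun !card_ord.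
Qed.
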